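(* Let $s_1\ge\dots\ge s_p$ be the eigenvalues of $\widehat\Sigma$ and $v_1,\dots,v_p$ corresponding orthonormal eigenvectors. Let $\lambda>0$ satisfy $$\lambda\sum_{j=i}^p s_j\langle\beta_0,v_j\rangle^2\ge\frac{\sigma^2}{n}\sum_{j=i}^ps_j\qquad\text{for all } i=1,\dots,p.$$ Then the map $t\mapsto\mathcal{R}^{\mathrm{in}}_{\lambda,\beta_0}(\hat\beta^{\mathrm{GF}}_{\lambda,t})$ is monotonically decreasing on $[0,\infty)$.
   Context: Let $n,p\in\mathbb{N}$. Observations $(x_i,y_i)$, $i=1,\dots,n$, are i.i.d. with $x_i\in\mathbb{R}^p$, $y_i\in\mathbb{R}$, $y_i=x_i^\top\beta_0+\varepsilon_i$, $\mathbb{E}[\varepsilon_i\mid x_i]=0$, $\operatorname{Var}(\varepsilon_i\mid x_i)=\sigma^2>0$. $X\in\mathbb{R}^{n\times p}$ has rows $x_i^\top$, $y=(y_i)$; assume $\beta_0=X^+X\beta_0$. Matrix functions are defined by functional calculus. $\widehat\Sigma=\frac1nX^\top X$, $\widehat\Sigma_\lambda=\widehat\Sigma+\lambda I_p$, $y_\lambda=\frac1n\widehat\Sigma_\lambda^{-1/2}X^\top y$. Gradient flow estimator for the ridge criterion $\frac1{2n}\|y-X\beta\|^2+\frac\lambda2\|\beta\|^2$: $\hat\beta^{\mathrm{GF}}_{\lambda,t}=\widehat\Sigma_\lambda^{-1/2}(I_p-\exp(-t\widehat\Sigma_\lambda))y_\lambda$, $t\ge0$. For an estimator $\hat\beta$: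 $\mathcal{R}^{\mathrm{in}}_{\lambda,\beta_0}(\hat\beta)=\mathbb{E}[\|\widehat\Sigma_\lambda^{1/2}(\hat\beta-\beta_0)\|^2\mid X]$. *)

From HB Require Import structures.
From mathcomp Require Import all_boot all_order all_algebra.
From mathcomp Require Import all_classical all_reals all_analysis.
Set Implicit Arguments. Unset Strict Implicit. Unset Printing Implicit Defensive.
Import Order.TTheory GRing.Theory Num.Theory.
Local Open Scope ring_scope.

Section Defs.
Variable R : realType.

(* Moore--Penrose pseudoinverse: Xp is THE (unique) matrix satisfying the
   four Penrose equations (real matrices: adjoint = transpose). *)
Definition is_pinv m k (X : 'M[R]_(m, k)) (Xp : 'M[R]_(k, m)) : Prop :=
  [/\ X *m Xp *m X = X, Xp *m X *m Xp = Xp,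
      (X *m Xp)^T = X *m Xp & (Xp *m X)^T = Xp *m X].

Definition sigma_hat n p (X : 'M[R]_(n, p)) : 'M[R]_p := (n%:R)^-1 *: (X^T *m X).

(* Functional calculus of a symmetric matrix A = V diag(d) V^T (V orthogonal):
   f(A) := V diag(f(d_1),...,f(d_p)) V^T. *)
Definition mxfun p (V : 'M[R]_p) (d : 'I_p -> R) (f : R -> R) : 'M[R]_p :=
  V *m diag_mx (\row_j f (d j)) *m V^T.

Definition sqnorm k (u : 'cV[R]_k) : R := \sum_i u i 0 ^+ 2.

Definition dotc k (u v : 'cV[R]_k) : R := \sum_i u i 0 * v i 0.

(* Given the eigendecomposition (V, s) of \widehat\Sigma, the eigenvalues of
   \widehat\Sigma_\lambda = \widehat\Sigma + \lambda I are s_j + \lambda with the same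
   eigenvectors. *)
Definition sigl_eig p (s : 'I_p -> R) (lam : R) : 'I_p -> R := fun j => s j + lam.

Definition sigl_sqrt p (V : 'M[R]_p) s lam := mxfun V (sigl_eig s lam) (fun x => Num.sqrt x).
Definition sigl_isqrt p (V : 'M[R]_p) s lam := mxfun V (sigl_eig s lam) (fun x => (Num.sqrt x)^-1).
Definition sigl_exp p (V : 'M[R]_p) s lam (t : R) :=
  mxfun V (sigl_eig s lam) (fun x => expR (- (t * x))).

Definition y_lam n p (X : 'M[R]_(n, p)) (V : 'M[R]_p) s lam (y : 'cV[R]_n) : 'cV[R]_p :=
  (n%:R)^-1 *: (sigl_isqrt V s lam *m X^T *m y).

Definition beta_gf n p (X : 'M[R]_(n, p)) (V : 'M[R]_p) s lam (t : R) (y : 'cV[R]_n)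
  : 'cV[R]_p :=
  sigl_isqrt V s lam *m (1%:M - sigl_exp V s lam t) *m y_lam X V s lam y.

Definition risk_in d (T : measurableType d) (P : probability T R) n p
  (X : 'M[R]_(n, p)) (V : 'M[R]_p) s lam (beta0 : 'cV[R]_p)
  (eps : T -> 'cV[R]_n) (est : 'cV[R]_n -> 'cV[R]_p) : \bar R :=
  'E_P[fun w => sqnorm (sigl_sqrt V s lam *m (est (X *m beta0 + eps w) - beta0))].

End Defs.

From HB Require Import structures.
From mathcomp Require Import all_boot all_order all_algebra.
From mathcomp Require Import all_classical all_reals all_analysis.
From mathcomp Require Import ring lra.
Import Order.TTheory GRing.Theory Num.Theory.
Set Implicit Arguments. Unset Strict Implicit. Unset Printing Implicit Defensive.
Local Open Scope ring_scope.

(* In the eigenbasis (v_j) of \widehat\Sigma put a_j = s_j + lam, b_j = <beta0, v_j>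
   and E_j(t) = exp (- t a_j).  Gradient flow multiplies the j-th coordinate of
   (1/n) X^T y by the filter (1 - E_j(t)) / a_j, and the white noise enters the
   risk only through its covariance, so the risk is sum_j h_j(t) with
     h_j(t) = ((lam + E_j(t) s_j)^2 b_j^2 + (sigma^2/n) (1 - E_j(t))^2 s_j) / a_j.
   For t1 <= t2, h_j(t2) - h_j(t1) <= 2 c_j w_j where c_j = (E_j(t1) - E_j(t2)) / a_j
   and w_j = s_j (sigma^2/n - lam b_j^2).  Since (exp (- t1 a) - exp (- t2 a)) / a
   decreases in a and the a_j decrease in j, the c_j >= 0 are nondecreasing in j;
   the hypothesis says that every tail sum of the w_j is <= 0, so Abel summation
   gives sum_j c_j w_j <= 0. *)

Section WhiteNoise.
Variables (R : realType) (d : measure_display) (T : measurableType d).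
Variable P : probability T R.

Let sum_fctE (I : Type) (r : seq I) (F : I -> T -> R) :
  (fun w => \sum_(i <- r) F i w) = \sum_(i <- r) F i.
Proof. by apply/funext => w; rewrite fct_sumE. Qed.

Lemma Lfun_big (I : Type) (r : seq I) (F : I -> T -> R) :
  (forall i, F i \in Lfun P 1) -> (fun w => \sum_(i <- r) F i w) \in Lfun P 1.
Proof. by move=> LF; rewrite sum_fctE rpred_sum. Qed.

Lemma expectation_big (I : Type) (r : seq I) (F : I -> T -> R) :
  (forall i, F i \in Lfun P 1) ->
  ('E_P[fun w => (\sum_(i <- r) F i w)%R] = \sum_(i <- r) 'E_P[F i])%E.
Proof.
move=> LF; rewrite sum_fctE.
elim: r => [|i r IH]; first by rewrite !big_nil expectation_cst.
by rewrite !big_cons expectationD ?IH ?rpred_sum.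
Qed.

Lemma Lfun_mull (k : R) (f : T -> R) :
  f \in Lfun P 1 -> (fun w => k * f w) \in Lfun P 1.
Proof. by move=> Lf; rewrite (_ : (fun w => _) = k *: f) ?rpredZ. Qed.

Lemma expectation_mull (k : R) (f : T -> R) : f \in Lfun P 1 ->
  ('E_P[fun w => (k * f w)%R] = k%:E * 'E_P[f])%E.
Proof.
move=> Lf; rewrite -expectationZl //; congr (expectation P _).
by apply/funext => w /=; rewrite mulrC.
Qed.

Variables (n : nat) (eps : T -> 'cV[R]_n) (sigma : R).
Hypothesis eps_integrable : forall i, P.-integrable setT (fun w => (eps w i ord0)%:E).
Hypothesis eps2_integrable :
  forall i j, P.-integrable setT (fun w => (eps w i ord0 * eps w j ord0)%:E).
Hypothesis eps_mean : forall i, ('E_P[fun w => eps w i ord0] = 0)%E.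
Hypothesis eps_cov : forall i j,
  ('E_P[fun w => (eps w i ord0 * eps w j ord0)%R] = (sigma ^+ 2 * (i == j)%:R)%:E)%E.

Let Lfun_eps i : (fun w => eps w i ord0) \in Lfun P 1.
Proof. exact/Lfun1_integrable/eps_integrable. Qed.

Let Lfun_eps2 i j : (fun w => eps w i ord0 * eps w j ord0) \in Lfun P 1.
Proof. exact/Lfun1_integrable/eps2_integrable. Qed.

Let Lfun_lin (g : 'I_n -> R) i : (fun w => g i * eps w i ord0) \in Lfun P 1.
Proof. exact/Lfun_mull. Qed.

Let Lfun_quad (q : 'I_n -> 'I_n -> R) i j :
  (fun w => q i j * (eps w i ord0 * eps w j ord0)) \in Lfun P 1.
Proof. exact/Lfun_mull. Qed.

Lemma Lfun_noise_lin (g : 'I_n -> R) :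
  (fun w => \sum_i g i * eps w i ord0) \in Lfun P 1.
Proof. exact: Lfun_big. Qed.

Lemma Lfun_noise_quad (q : 'I_n -> 'I_n -> R) :
  (fun w => \sum_i \sum_j q i j * (eps w i ord0 * eps w j ord0)) \in Lfun P 1.
Proof. by apply: Lfun_big => i; apply: Lfun_big. Qed.

Lemma expectation_noise_lin (g : 'I_n -> R) :
  ('E_P[fun w => (\sum_i g i * eps w i ord0)%R] = 0)%E.
Proof.
by rewrite expectation_big // big1 // => i _; rewrite expectation_mull ?eps_mean ?mule0.
Qed.

Lemma expectation_noise_quad (q : 'I_n -> 'I_n -> R) :
  ('E_P[fun w => (\sum_i \sum_j q i j * (eps w i ord0 * eps w j ord0))%R]
   = (sigma ^+ 2 * \sum_i q i i)%:E)%E.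
Proof.
rewrite expectation_big => [|i]; last exact: Lfun_big.
rewrite mulr_sumr -sumEFin; apply: eq_bigr => i _.
rewrite expectation_big // (bigD1 i) //= big1 ?adde0 => [|j ji].
  by rewrite expectation_mull ?eps_cov // eqxx mulr1 -EFinM mulrC.
by rewrite expectation_mull ?eps_cov 1?eq_sym ?(negPf ji) ?mulr0 ?mule0 //.
Qed.

Let sqr_affine_noiseE (a : R) (g : 'I_n -> R) :
  (fun w => (a + \sum_i g i * eps w i ord0) ^+ 2)
  = cst (a ^+ 2) \+ (fun w => \sum_i (2 * a * g i) * eps w i ord0)
      \+ (fun w => \sum_i \sum_j (g i * g j) * (eps w i ord0 * eps w j ord0)).
Proof.
apply/funext => w /=.
have -> : \sum_i (2 * a * g i) * eps w i ord0 = 2 * a * \sum_i g i * eps w i ord0.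
  by rewrite mulr_sumr; apply: eq_bigr => i _; rewrite mulrA.
have -> : \sum_i \sum_j (g i * g j) * (eps w i ord0 * eps w j ord0)
    = (\sum_i g i * eps w i ord0) ^+ 2.
  rewrite expr2 mulr_suml; apply: eq_bigr => i _.
  by rewrite mulr_sumr; apply: eq_bigr => j _; ring.
ring.
Qed.

Lemma Lfun_sqr_affine_noise (a : R) (g : 'I_n -> R) :
  (fun w => (a + \sum_i g i * eps w i ord0) ^+ 2) \in Lfun P 1.
Proof. by rewrite sqr_affine_noiseE !rpredD ?Lfun_cst ?Lfun_noise_lin ?Lfun_noise_quad. Qed.

Lemma expectation_sqr_affine_noise (a : R) (g : 'I_n -> R) :
  ('E_P[fun w => ((a + \sum_i g i * eps w i ord0) ^+ 2)%R]
   = (a ^+ 2 + sigma ^+ 2 * \sum_i g i ^+ 2)%:E)%E.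
Proof.
rewrite sqr_affine_noiseE !expectationD ?rpredD ?Lfun_cst ?Lfun_noise_lin ?Lfun_noise_quad //.
rewrite expectation_cst expectation_noise_lin expectation_noise_quad adde0.
by under eq_bigr do rewrite -expr2.
Qed.

End WhiteNoise.

Section AbelSummation.
Variable R : realFieldType.

Lemma abel_sum_le0 (N : nat) (c w : nat -> R) :
  (forall i, (i.+1 < N)%N -> c i <= c i.+1) -> 0 <= c 0%N ->
  (forall i, (i <= N)%N -> \sum_(i <= j < N) w j <= 0) ->
  \sum_(0 <= j < N) c j * w j <= 0.
Proof.
move=> c_mono c0_ge0 tail_le0.
have tail_bound m k : (k + m = N)%N ->
    \sum_(k <= j < N) c j * w j <= c k * \sum_(k <= j < N) w j.
  elim: m k => [|m IH] k kmN; first by rewrite !big_geq ?mulr0 // -kmN addn0.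
  have kN : (k < N)%N by rewrite -kmN addnS ltnS leq_addr.
  rewrite big_ltn // [\sum_(k <= j < N) w j]big_ltn // mulrDr lerD2l.
  apply: (le_trans (IH k.+1 _)); first by rewrite addSnnS.
  have [k1N|] := ltnP k.+1 N; last by move=> Nk1; rewrite big_geq // !mulr0.
  by apply: ler_wnM2r; [apply: tail_le0 | apply: c_mono].
by apply: (le_trans (tail_bound N 0%N (add0n N))); rewrite mulr_ge0_le0 ?tail_le0.
Qed.

Lemma abel_sum_ord_le0 (p : nat) (c w : 'I_p -> R) :
  (forall i j : 'I_p, (i <= j)%N -> c i <= c j) -> (forall i, 0 <= c i) ->
  (forall i : 'I_p, \sum_(j : 'I_p | (i <= j)%N) w j <= 0) ->
  \sum_j c j * w j <= 0.
Proof.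
case: p c w => [|p] c w c_mono c_ge0 tail_le0; first by rewrite big_ord0.
rewrite (eq_bigr (fun j : 'I_p.+1 => c (inord j) * w (inord j))); last first.
  by move=> j _; rewrite inord_val.
rewrite -(big_mkord xpredT (fun j => c (inord j) * w (inord j))).
apply: abel_sum_le0 => [i ip|//|i ip].
  by apply: c_mono; rewrite !inordK // ltnW.
have [ip1|] := ltnP i p.+1; last by move=> pi; rewrite big_geq.
rewrite big_geq_mkord (eq_bigl (fun j : 'I_p.+1 => (@inord p i <= j)%N)) => [|j].
  by rewrite (eq_bigr w) ?tail_le0 // => j _; rewrite inord_val.
by rewrite inordK.
Qed.

End AbelSummation.

Section GradientFlowFilter.
Variable R : realType.

Lemma mul_one_sub_expRN_le (x y : R) : 0 <= x -> x <= y ->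
  x * (1 - expR (- y)) <= y * (1 - expR (- x)).
Proof.
move=> x_ge0 xy; set z := y - x.
have z_ge0 : 0 <= z by rewrite subr_ge0.
have -> : y = x + z by rewrite /z; ring.
have -> : expR (- (x + z)) = expR (- x) * expR (- z) by rewrite -expRD opprD.
have ez : 1 - z <= expR (- z) by have := expR_ge1Dx (- z); lra.
have ex : expR (- x) * (1 + x) <= 1.
  have : expR (- x) * (1 + x) <= expR (- x) * expR x.
    by rewrite ler_pM2l ?expR_gt0 ?expR_ge1Dx.
  by rewrite -expRD addNr expR0.
have xex_ge0 : 0 <= x * expR (- x) by rewrite mulr_ge0 ?expR_ge0.
rewrite -subr_ge0.
have -> : (x + z) * (1 - expR (- x)) - x * (1 - expR (- x) * expR (- z))
  = z * (1 - expR (- x)) - x * expR (- x) * (1 - expR (- z)) by ring.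
rewrite subr_ge0; apply: (@le_trans _ _ (x * expR (- x) * z)).
  by apply: ler_wpM2l => //; lra.
by rewrite mulrC; apply: ler_wpM2l => //; lra.
Qed.

Lemma expRN_gap_div_le (t1 t2 a a' : R) : 0 <= t1 -> t1 <= t2 -> 0 < a' -> a' <= a ->
  (expR (- (t1 * a)) - expR (- (t2 * a))) / a
    <= (expR (- (t1 * a')) - expR (- (t2 * a'))) / a'.
Proof.
move=> t1_ge0 t12 a'_gt0 a'a; have a_gt0 : 0 < a by apply: lt_le_trans a'a.
set u := t2 - t1; have u_ge0 : 0 <= u by rewrite subr_ge0.
have split_gap b : (expR (- (t1 * b)) - expR (- (t2 * b))) / b
    = expR (- (t1 * b)) * ((1 - expR (- (u * b))) / b).
  have -> : t2 * b = t1 * b + u * b by rewrite /u; ring.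
  by rewrite opprD expRD mulrA mulrBr mulr1.
rewrite !split_gap; apply: ler_pM.
- exact: expR_ge0.
- by rewrite divr_ge0 ?subr_ge0 ?expR_le1 ?oppr_le0 ?mulr_ge0 // ltW.
- by rewrite ler_expR lerN2 ler_wpM2l.
rewrite ler_pdivrMr // mulrAC ler_pdivlMr //.
have [->|u_neq0] := eqVneq u 0; first by rewrite !mul0r oppr0 expR0 subrr !mul0r.
have u_gt0 : 0 < u by rewrite lt_def u_neq0 u_ge0.
rewrite -(ler_pM2l u_gt0) !mulrA ![u * _ * a]mulrAC ![u * _ * a']mulrAC.
by apply: mul_one_sub_expRN_le; rewrite ?mulr_ge0 ?ler_wpM2l // ltW.
Qed.

End GradientFlowFilter.

Section CoordinateRisk.
Variable R : realType.

Definition coord_risk (lam k t s b : R) :=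
  ((lam + expR (- (t * (s + lam))) * s) ^+ 2 * b ^+ 2
    + k * (1 - expR (- (t * (s + lam)))) ^+ 2 * s) / (s + lam).

Lemma coord_risk_increment_le (lam k t1 t2 s b : R) :
  0 < lam -> 0 <= k -> 0 <= s -> 0 <= t1 -> t1 <= t2 ->
  coord_risk lam k t2 s b - coord_risk lam k t1 s b
  <= 2 * ((expR (- (t1 * (s + lam))) - expR (- (t2 * (s + lam)))) / (s + lam)
          * (s * (k - lam * b ^+ 2))).
Proof.
move=> lam_gt0 k_ge0 s_ge0 t1_ge0 t12; have a_gt0 : 0 < s + lam by rewrite ltr_wpDl.
set E1 := expR (- (t1 * (s + lam))); set E2 := expR (- (t2 * (s + lam))).
have E21 : E2 <= E1 by rewrite ler_expR lerN2 ler_wpM2r // ltW.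
have E2_ge0 : 0 <= E2 by apply: expR_ge0.
rewrite /coord_risk -/E1 -/E2 -subr_ge0.
have -> : 2 * ((E1 - E2) / (s + lam) * (s * (k - lam * b ^+ 2)))
    - (((lam + E2 * s) ^+ 2 * b ^+ 2 + k * (1 - E2) ^+ 2 * s) / (s + lam)
       - ((lam + E1 * s) ^+ 2 * b ^+ 2 + k * (1 - E1) ^+ 2 * s) / (s + lam))
  = (E1 - E2) * s * (E1 + E2) * (b ^+ 2 * s + k) / (s + lam).
  by field; rewrite gt_eqF.
have E1_ge0 := le_trans E2_ge0 E21.
apply: divr_ge0 (ltW a_gt0); apply: mulr_ge0; last by rewrite addr_ge0 // mulr_ge0 // sqr_ge0.
by rewrite !mulr_ge0 ?subr_ge0 ?addr_ge0.
Qed.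

Lemma sum_coord_risk_antitone p (s b : 'I_p -> R) (lam k t1 t2 : R) :
  0 < lam -> 0 <= k -> (forall j, 0 <= s j) ->
  (forall i j : 'I_p, (i <= j)%N -> s j <= s i) ->
  (forall i : 'I_p, k * (\sum_(j : 'I_p | (i <= j)%N) s j)
       <= lam * (\sum_(j : 'I_p | (i <= j)%N) s j * b j ^+ 2)) ->
  0 <= t1 -> t1 <= t2 ->
  \sum_j coord_risk lam k t2 (s j) (b j) <= \sum_j coord_risk lam k t1 (s j) (b j).
Proof.
move=> lam_gt0 k_ge0 s_ge0 s_anti tail_cond t1_ge0 t12.
pose a j := s j + lam.
pose c j := (expR (- (t1 * a j)) - expR (- (t2 * a j))) / a j.
pose w j := s j * (k - lam * b j ^+ 2).
have a_gt0 j : 0 < a j by rewrite ltr_wpDl.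
have weighted_le0 : \sum_j c j * w j <= 0.
  apply: abel_sum_ord_le0 => [i j ij|j|i].
  - by apply: expRN_gap_div_le; rewrite ?lerD2r ?s_anti.
  - by rewrite divr_ge0 ?subr_ge0 ?ler_expR ?lerN2 ?ler_wpM2r ?(ltW (a_gt0 j)).
  - rewrite (eq_bigr (fun j => k * s j - lam * (s j * b j ^+ 2))) => [|j _].
      by rewrite sumrB -!mulr_sumr subr_le0.
    by rewrite /w; ring.
rewrite -subr_le0 -sumrB (le_trans _ (_ : 2 * \sum_j c j * w j <= 0)) //.
  by rewrite mulr_sumr; apply: ler_sum => j _; apply: coord_risk_increment_le.
by rewrite pmulr_rle0.
Qed.

End CoordinateRisk.

Section SpectralCalculus.
Variables (R : realType) (p : nat) (V : 'M[R]_p).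
Hypothesis V_orth : V^T *m V = 1%:M.

Lemma trmx_mul_mxfun d f : V^T *m mxfun V d f = diag_mx (\row_j f (d j)) *m V^T.
Proof. by rewrite /mxfun !mulmxA V_orth mul1mx. Qed.

Lemma mxfunM d f g : mxfun V d f *m mxfun V d g = mxfun V d (fun x => f x * g x).
Proof.
rewrite {1}/mxfun -mulmxA trmx_mul_mxfun mulmxA -(mulmxA V) mulmx_diag.
by congr (V *m diag_mx _ *m V^T); apply/rowP => j; rewrite !mxE.
Qed.

Lemma eq_mxfun d f g : (forall j, f (d j) = g (d j)) -> mxfun V d f = mxfun V d g.
Proof.
by move=> fg; rewrite /mxfun; congr (_ *m diag_mx _ *m _); apply/rowP => j; rewrite !mxE.
Qed.

Lemma one_sub_mxfun d f : 1%:M - mxfun V d f = mxfun V d (fun x => 1 - f x).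
Proof.
rewrite /mxfun.
have -> : \row_j (1 - f (d j)) = const_mx 1 - \row_j f (d j) :> 'rV[R]_p.
  by apply/rowP => j; rewrite !mxE.
by rewrite raddfB /= diag_const_mx mulmxBr mulmxBl mulmx1 (mulmx1C V_orth).
Qed.

Lemma sqnorm_orthomx (u : 'cV[R]_p) : sqnorm (V *m u) = sqnorm u.
Proof.
have sqnormE k (v : 'cV[R]_k) : sqnorm v = (v^T *m v) 0 0.
  by rewrite /sqnorm mxE; apply: eq_bigr => i _; rewrite mxE expr2.
by rewrite !sqnormE trmx_mul mulmxA -(mulmxA u^T) V_orth mulmx1.
Qed.

Lemma trmx_mul_eigenbasis (A : 'M[R]_p) (s : 'I_p -> R) :
  (forall j, A *m col j V = s j *: col j V) ->
  V^T *m A = diag_mx (\row_j s j) *m V^T.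
Proof.
move=> eigAV; have AV : A *m V = V *m diag_mx (\row_j s j).
  apply/matrixP => i j.
  have -> : (A *m V) i j = (A *m col j V) i 0 by rewrite colE mulmxA -colE [RHS]mxE.
  by rewrite eigAV mul_mx_diag !mxE mulrC.
by rewrite -[A]mulmx1 -(mulmx1C V_orth) !mulmxA -(mulmxA V^T) AV mulmxA V_orth mul1mx.
Qed.

Lemma trmx_mul_col_dotc (b : 'cV[R]_p) j : (V^T *m b) j ord0 = dotc b (col j V).
Proof. by rewrite mxE /dotc; apply: eq_bigr => i _; rewrite !mxE mulrC. Qed.

End SpectralCalculus.

Definition gf_filter (R : realType) (t a : R) := (1 - expR (- (t * a))) / a.

Section GradientFlowEigenbasis.
Variables (R : realType) (n p : nat) (X : 'M[R]_(n, p)) (V : 'M[R]_p).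
Variables (s : 'I_p -> R) (lam : R).
Hypothesis V_orth : V^T *m V = 1%:M.
Hypothesis sigma_hat_eigen : forall j, sigma_hat X *m col j V = s j *: col j V.
Hypothesis lam_gt0 : 0 < lam.

Let diag_mulmx m (f : 'I_p -> R) (M : 'M[R]_(p, m)) j k :
  (diag_mx (\row_i f i) *m M) j k = f j * M j k.
Proof. by rewrite mul_diag_mx !mxE. Qed.

Lemma eigval_sigma_hat j : s j = n%:R^-1 * \sum_i (X *m V) i j ^+ 2.
Proof.
have -> : s j = (V^T *m sigma_hat X *m V) j j.
  by rewrite (trmx_mul_eigenbasis V_orth sigma_hat_eigen) -mulmxA V_orth diag_mulmx
    mxE eqxx mulr1.
rewrite /sigma_hat -scalemxAr -scalemxAl mxE; congr (_ * _).
have -> : V^T *m (X^T *m X) *m V = (X *m V)^T *m (X *m V) by rewrite trmx_mul !mulmxA.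
by rewrite mxE; apply: eq_bigr => i _; rewrite mxE expr2.
Qed.

Lemma eigval_sigma_hat_ge0 j : 0 <= s j.
Proof.
by rewrite eigval_sigma_hat mulr_ge0 ?invr_ge0 ?ler0n ?sumr_ge0 // => i _; apply: sqr_ge0.
Qed.

Let shifted_gt0 j : 0 < s j + lam.
Proof. by rewrite ltr_wpDl ?eigval_sigma_hat_ge0. Qed.

Lemma trmx_mul_beta_gf t y : V^T *m beta_gf X V s lam t y
  = diag_mx (\row_j gf_filter t (s j + lam)) *m (n%:R^-1 *: (V^T *m X^T *m y)).
Proof.
rewrite /beta_gf /y_lam /sigl_isqrt /sigl_exp one_sub_mxfun // mxfunM //.
rewrite -scalemxAr (mulmxA _ _ y) (mulmxA _ _ X^T) mxfunM //.
rewrite (@eq_mxfun _ _ _ _ _ (gf_filter t)) => [|j]; last first.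
  by rewrite /gf_filter /sigl_eig mulrAC -invfM -expr2 sqr_sqrtr 1?mulrC ?ltW.
rewrite -!scalemxAr; congr (_ *: _).
by rewrite !mulmxA V_orth mul1mx.
Qed.

Lemma sqnorm_err_beta_gf t beta0 e :
  sqnorm (sigl_sqrt V s lam *m (beta_gf X V s lam t (X *m beta0 + e) - beta0))
  = \sum_j (s j + lam) * ((gf_filter t (s j + lam) * s j - 1) * (V^T *m beta0) j ord0
       + \sum_i (gf_filter t (s j + lam) / n%:R * (X *m V) i j) * e i ord0) ^+ 2.
Proof.
rewrite /sigl_sqrt /mxfun -!mulmxA sqnorm_orthomx //; apply: eq_bigr => j _.
rewrite diag_mulmx exprMn sqr_sqrtr ?(ltW (shifted_gt0 j)) //; congr (_ * _ ^+ 2).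
have signal :
    n%:R^-1 *: (V^T *m X^T *m (X *m beta0)) = diag_mx (\row_j s j) *m (V^T *m beta0).
  rewrite [RHS]mulmxA -(trmx_mul_eigenbasis V_orth sigma_hat_eigen) /sigma_hat.
  by rewrite -scalemxAr -scalemxAl !mulmxA.
have noise : (n%:R^-1 *: ((X *m V)^T *m e)) j ord0
    = \sum_i (n%:R^-1 * (X *m V) i j) * e i ord0.
  rewrite mxE [(_ *m e) _ _]mxE mulr_sumr; apply: eq_bigr => i _.
  by rewrite [(_^T) _ _]mxE mulrA.
have entryD (A B : 'cV[R]_p) : (A + B) j ord0 = A j ord0 + B j ord0 by rewrite mxE.
have entryB (A B : 'cV[R]_p) : (A - B) j ord0 = A j ord0 - B j ord0 by rewrite !mxE.
rewrite mulmxBr trmx_mul_beta_gf mulmxDr scalerDr mulmxDr signal -trmx_mul.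
rewrite entryB entryD !diag_mulmx noise mulr_sumr.
under eq_bigr do rewrite !mulrA.
ring.
Qed.

Hypothesis n_gt0 : (0 < n)%N.
Variables (d : measure_display) (T : measurableType d) (P : probability T R).
Variables (eps : T -> 'cV[R]_n) (sigma : R).
Hypothesis eps_integrable : forall i, P.-integrable setT (fun w => (eps w i ord0)%:E).
Hypothesis eps2_integrable :
  forall i j, P.-integrable setT (fun w => (eps w i ord0 * eps w j ord0)%:E).
Hypothesis eps_mean : forall i, ('E_P[fun w => eps w i ord0] = 0)%E.
Hypothesis eps_cov : forall i j,
  ('E_P[fun w => (eps w i ord0 * eps w j ord0)%R] = (sigma ^+ 2 * (i == j)%:R)%:E)%E.

Lemma risk_in_beta_gf beta0 t : risk_in P X V s lam beta0 eps (beta_gf X V s lam t)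
  = (\sum_j coord_risk lam (sigma ^+ 2 / n%:R) t (s j) (dotc beta0 (col j V)))%:E.
Proof.
rewrite /risk_in; under eq_fun do rewrite sqnorm_err_beta_gf.
rewrite expectation_big => [|j]; last exact/Lfun_mull/Lfun_sqr_affine_noise.
rewrite -sumEFin; apply: eq_bigr => j _.
rewrite expectation_mull ?Lfun_sqr_affine_noise //.
rewrite (expectation_sqr_affine_noise eps_integrable eps2_integrable eps_mean eps_cov).
rewrite -EFinM; congr EFin.
set G := gf_filter t (s j + lam).
have noise_gain : \sum_i (G / n%:R * (X *m V) i j) ^+ 2 = G ^+ 2 / n%:R * s j.
  rewrite (eigval_sigma_hat j) [RHS]mulrA mulr_sumr; apply: eq_bigr => i _; ring.
have n_neq0 : n%:R != 0 :> R by rewrite pnatr_eq0 -lt0n.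
rewrite noise_gain trmx_mul_col_dotc /coord_risk /G /gf_filter.
by field; rewrite n_neq0 gt_eqF.
Qed.

End GradientFlowEigenbasis.

Theorem proposition3p11 (R : realType) (n p : nat) (X : 'M[R]_(n, p))
  (beta0 : 'cV[R]_p) (sigma lam : R)
  (d : measure_display) (T : measurableType d) (P : probability T R)
  (eps : T -> 'cV[R]_n)
  (s : 'I_p -> R) (V : 'M[R]_p) :
  (0 < n)%N ->
  0 < sigma ->
  (* noise, conditionally on X: mean zero, covariance sigma^2 I_n *)
  (forall i : 'I_n, P.-integrable setT (fun w => (eps w i ord0)%:E)) ->
  (forall i j : 'I_n, P.-integrable setT (fun w => (eps w i ord0 * eps w j ord0)%:E)) ->
  (forall i : 'I_n, ('E_P[fun w => eps w i ord0] = 0)%E) ->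
  (forall i j : 'I_n,
     ('E_P[fun w => (eps w i ord0 * eps w j ord0)%R] = (sigma ^+ 2 * (i == j)%:R)%:E)%E) ->
  (* beta0 = X^+ X beta0 *)
  (exists Xp : 'M[R]_(p, n), is_pinv X Xp /\ beta0 = Xp *m X *m beta0) ->
  (* s_1 >= ... >= s_p eigenvalues of \widehat\Sigma, v_j = col j V orthonormal eigenvectors *)
  (forall i j : 'I_p, (i <= j)%N -> s j <= s i) ->
  V^T *m V = 1%:M ->
  (forall j : 'I_p, sigma_hat X *m col j V = s j *: col j V) ->
  0 < lam ->
  (forall i : 'I_p,
     lam * (\sum_(j : 'I_p | (i <= j)%N) s j * dotc beta0 (col j V) ^+ 2)
       >= sigma ^+ 2 / n%:R * (\sum_(j : 'I_p | (i <= j)%N) s j)) ->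
  forall t1 t2 : R, 0 <= t1 -> t1 <= t2 ->
    (risk_in P X V s lam beta0 eps (beta_gf X V s lam t2)
       <= risk_in P X V s lam beta0 eps (beta_gf X V s lam t1))%E.
Proof.
move=> n_gt0 _ eps_int eps2_int eps_mean eps_cov _ s_anti V_orth eigen lam_gt0 tail_cond.
move=> t1 t2 t1_ge0 t12.
have riskE := risk_in_beta_gf V_orth eigen lam_gt0 n_gt0 eps_int eps2_int eps_mean eps_cov.
rewrite !riskE lee_fin; apply: sum_coord_risk_antitone => //.
- by rewrite divr_ge0 ?sqr_ge0 ?ler0n.
- exact: eigval_sigma_hat_ge0 V_orth eigen.
Qed.
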